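(* Let $\rho\in\mathbb R$ and let $\mathbf b=\{b_n\}_{n\ge1}$ be an admissible sequence of real numbers. For every $\beta\in\mathbb R$ assume that the Dirichlet series $f_\beta(s)=\sum_{n\in\mathrm{supp}(\mathbf b)}n^{i\beta}b_nn^{-s}$ converges on $\mathbb H_\rho$. Then the family $\{f_\beta:\beta\in\mathbb R\}$ is linearly independent in the space $\mathrm{Hol}(\mathbb H_\rho)$ of holomorphic functions on $\mathbb H_\rho$.
   Context: $\mathbb H_\rho=\{\Re s>\rho\}$. A sequence $\mathbf b$ of real numbers is admissible if its support $\mathrm{supp}(\mathbf b)=\{n\in\mathbb N:b_n\ne0\}$ is an infinite subset of $\mathbb N$ closed under multiplication and there exist $p,q\in\mathrm{supp}(\mathbf b)\setminus\{1\}$ with $\gcd(p,q)=1$. *)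

From Stdlib Require Import Reals Arith.
From Coquelicot Require Import Coquelicot.
Open Scope R_scope.

Definition in_supp (b : nat -> R) (n : nat) : Prop := (1 <= n)%nat /\ b n <> 0.

(* Admissible sequence (b_n)_{n>=1}; the value b 0 is irrelevant. *)
Definition admissible (b : nat -> R) : Prop :=
  (forall N : nat, exists n, (N < n)%nat /\ in_supp b n) /\
  (forall m n, in_supp b m -> in_supp b n -> in_supp b (m * n)) /\
  (exists p q, in_supp b p /\ in_supp b q /\ p <> 1%nat /\ q <> 1%nat /\ Nat.gcd p q = 1%nat).

(* principal complex power n^w = exp(w log n) for a positive integer n *)
Definition npow (n : nat) (w : C) : C :=
  let l := ln (INR n) in
  (exp (Re w * l) * cos (Im w * l), exp (Re w * l) * sin (Im w * l)).

(* n-th term of f_beta(s) = sum_{n in supp b} n^{i beta} b_n n^{-s}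
   (terms outside the support vanish); indexed from n = 1 via k = n - 1. *)
Definition dterm (b : nat -> R) (beta : R) (s : C) (k : nat) : C :=
  let n := S k in
  if Req_EM_T (b n) 0 then 0%C
  else (npow n (0, beta) * RtoC (b n) * npow n (- s))%C.

Definition dconv (b : nat -> R) (beta : R) (s : C) : Prop :=
  ex_series (dterm b beta s).

Definition fbeta (b : nat -> R) (beta : R) (s : C) : C :=
  (Series (fun k => Re (dterm b beta s k)), Series (fun k => Im (dterm b beta s k))).

Fixpoint csum (k : nat) (a : nat -> C) : C :=
  match k with O => 0%C | S k' => (csum k' a + a k')%C end.

(* A vanishing combination sum_j c_j f_{beta_j} is itself a Dirichlet series
   sum_n b_n P(n) n^{-s} with P(n) = sum_j c_j n^{i beta_j}; since Dirichlet
   coefficients are determined by the values at real s -> +oo, P vanishes on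
   supp(b).  Admissibility puts every p^a q^a' (a, a' >= 1) in the support, so
   all moments sum_j c_j z_j w_j z_j^a w_j^a' vanish, where z_j = p^{i beta_j}
   and w_j = q^{i beta_j}.  As log p / log q is irrational for coprime p, q,
   the pairs (z_j, w_j) are distinct, and a two-variable Vandermonde
   elimination forces every c_j to be 0. *)

From Stdlib Require Import Reals Arith ZArith Lia Lra Psatz Classical.
From Coquelicot Require Import Coquelicot.
Open Scope R_scope.

Lemma is_series_inv_consecutive :
  is_series (fun n => / ((INR n + 1) * (INR n + 2))) 1.
Proof.
  set (a := fun n => / ((INR n + 1) * (INR n + 2))).
  assert (partial : forall n, sum_n a n = 1 - / (INR n + 2) :> R).
  { induction n as [|n IH].
    - rewrite sum_O. unfold a. simpl. field.
    - rewrite sum_Sn, IH. unfold a. rewrite S_INR. pose proof (pos_INR n).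
      change plus with Rplus. field. lra. }
  change (is_lim_seq (sum_n a) 1).
  apply (is_lim_seq_ext (fun n => 1 - / (INR n + 2))); [intros n; now rewrite partial|].
  replace (Finite 1) with (Rbar_minus 1 (Rbar_inv p_infty)) by (simpl; f_equal; ring).
  apply is_lim_seq_minus'; [apply is_lim_seq_const|].
  apply (is_lim_seq_inv _ p_infty); [|discriminate].
  eapply is_lim_seq_plus; [apply is_lim_seq_INR | apply is_lim_seq_const | reflexivity].
Qed.

Lemma series_isolated_term_bound (w g : nat -> R) (N : nat) (G : R) :
  is_series w 0 -> is_series g G -> (forall k, 0 <= g k) ->
  (forall k, (k < N)%nat -> w k = 0) ->
  (forall k, (N < k)%nat -> Rabs (w k) <= g k) ->
  Rabs (w N) <= G.
Proof.
  intros Hw Hg g_ge0 w_lt w_gt.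
  assert (sum_g : forall n, sum_f_R0 g n <= G).
  { intros n. apply sum_incr; [|exact g_ge0]. now apply is_series_Reals. }
  assert (near : forall m, Rabs (sum_f_R0 w (m + N) - w N) <= sum_f_R0 g (m + N)).
  { induction m as [|m IH]; simpl.
    - replace (sum_f_R0 w N - w N) with 0; [rewrite Rabs_R0; now apply cond_pos_sum|].
      destruct N as [|N]; simpl; [ring|].
      rewrite sum_eq_R0 by (intros k Hk; apply w_lt; lia). ring.
    - replace (sum_f_R0 w (m + N) + w (S (m + N)) - w N)
        with ((sum_f_R0 w (m + N) - w N) + w (S (m + N))) by ring.
      eapply Rle_trans; [apply Rabs_triang|].
      apply Rplus_le_compat; [exact IH | apply w_gt; lia]. }
  assert (lim : is_lim_seq (fun m => Rabs (sum_f_R0 w (m + N))) 0).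
  { apply (is_lim_seq_abs_0 (fun m => sum_f_R0 w (m + N))).
    apply (is_lim_seq_ext (fun m => sum_n w (m + N))); [intros m; apply sum_n_Reals|].
    apply (is_lim_seq_incr_n (sum_n w) N), Hw. }
  cut (Rbar_le (Rabs (w N) - G) 0); [simpl; lra|].
  refine (is_lim_seq_le (fun _ => Rabs (w N) - G) _ _ _ _ (is_lim_seq_const _) lim).
  intros m. specialize (near m). specialize (sum_g (m + N)%nat).
  pose proof (Rabs_triang (w N - sum_f_R0 w (m + N)) (sum_f_R0 w (m + N))) as tri.
  rewrite Rabs_minus_sym in tri.
  replace (w N - sum_f_R0 w (m + N) + sum_f_R0 w (m + N)) with (w N) in tri by ring.
  lra.
Qed.

Lemma le_geom_le0 (x K q : R) : 0 <= q < 1 -> (forall t, x <= K * q ^ t) -> x <= 0.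
Proof.
  intros Hq H.
  assert (lim : is_lim_seq (fun t => K * q ^ t) (K * 0)).
  { apply (is_lim_seq_scal_l (fun t => q ^ t) K 0), is_lim_seq_geom. rewrite Rabs_pos_eq; lra. }
  pose proof (is_lim_seq_le _ _ _ _ H (is_lim_seq_const x) lim) as Hle.
  simpl in Hle. lra.
Qed.

Lemma ex_series_bounded (a : nat -> R) : ex_series a -> exists M, forall k, Rabs (a k) <= M.
Proof.
  intros Ha. destruct (filterlim_bounded a) as [M HM].
  - exists 0. exact (ex_series_lim_0 a Ha).
  - exists M. exact HM.
Qed.

Lemma Rpower_shift_ratio (X A s : R) (n : nat) : 0 < X -> 0 < A ->
  Rpower X (- (s + INR n)) * Rpower A (s + INR n)
  = Rpower X (- s) * Rpower A s * (A / X) ^ n.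
Proof.
  intros HX HA.
  rewrite Ropp_plus_distr, !Rpower_plus, (Rpower_Ropp X (INR n)), !Rpower_pow by assumption.
  unfold Rdiv. rewrite Rpow_mult_distr, pow_inv. ring.
Qed.

Lemma ratio_pow_bound (A X : R) (t : nat) : 1 <= A -> A + 1 <= X ->
  (A / X) ^ (t + 2) <= 2 * A ^ 2 * (A / (A + 1)) ^ t / (X * (X + 1)).
Proof.
  intros HA HX.
  assert (ratio : 0 <= A / X <= A / (A + 1)).
  { split; [apply Rdiv_le_0_compat; lra|].
    apply Rmult_le_compat_l; [lra|]. apply Rinv_le_contravar; lra. }
  assert (square : (A / X) ^ 2 <= 2 * A ^ 2 / (X * (X + 1))).
  { replace (2 * A ^ 2 / (X * (X + 1))) with (A ^ 2 * / (X * (X + 1) / 2)) by (field; lra).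
    unfold Rdiv. rewrite Rpow_mult_distr, pow_inv.
    apply Rmult_le_compat_l; [nra|]. apply Rinv_le_contravar; nra. }
  rewrite pow_add.
  replace (2 * A ^ 2 * (A / (A + 1)) ^ t / (X * (X + 1)))
    with ((A / (A + 1)) ^ t * (2 * A ^ 2 / (X * (X + 1)))) by (field; lra).
  apply Rmult_le_compat; try apply pow_le; try lra.
  apply pow_incr. lra.
Qed.

Lemma dirichlet_term_ratio_bound (u M A X s : R) (t : nat) :
  1 <= A -> A + 1 <= X -> Rabs (u * Rpower X (- s)) <= M ->
  Rabs (u * Rpower X (- (s + INR (t + 2))) * Rpower A (s + INR (t + 2)))
  <= M * Rpower A s * (2 * A ^ 2 * (A / (A + 1)) ^ t / (X * (X + 1))).
Proof.
  intros HA HX Hu.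
  rewrite Rmult_assoc, Rpower_shift_ratio by lra.
  replace (u * (Rpower X (- s) * Rpower A s * (A / X) ^ (t + 2)))
    with (u * Rpower X (- s) * Rpower A s * (A / X) ^ (t + 2)) by ring.
  rewrite Rabs_mult, (Rabs_mult (u * Rpower X (- s))).
  rewrite (Rabs_pos_eq (Rpower A s)) by (apply Rlt_le, exp_pos).
  rewrite (Rabs_pos_eq (_ ^ _)) by (apply pow_le, Rdiv_le_0_compat; lra).
  apply Rmult_le_compat.
  - apply Rmult_le_pos; [apply Rabs_pos | apply Rlt_le, exp_pos].
  - apply pow_le, Rdiv_le_0_compat; lra.
  - apply Rmult_le_compat_r; [apply Rlt_le, exp_pos | exact Hu].
  - now apply ratio_pow_bound.
Qed.

(* Multiplying by (N+1)^s isolates e N once the earlier coefficients vanish;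
   since the terms are bounded at s0 + 1, the remaining tail at s0 + 1 + t + 2
   is O(q^t) with q = (N+1)/(N+2) < 1. *)
Lemma dirichlet_series_coeff_eq0 (e : nat -> R) (s0 : R) :
  (forall s, s0 < s -> is_series (fun k => e k * Rpower (INR (S k)) (- s)) 0) ->
  forall n, e n = 0.
Proof.
  intros H.
  set (s1 := s0 + 1).
  destruct (ex_series_bounded (fun k => e k * Rpower (INR (S k)) (- s1))) as [M HM].
  { eexists. apply H. unfold s1; lra. }
  intros N. induction N as [N IH] using (well_founded_induction lt_wf).
  set (A := INR (S N)). set (q := A / (A + 1)). set (K := 2 * M * Rpower A s1 * A ^ 2).
  assert (HA : 1 <= A) by (unfold A; rewrite S_INR; pose proof (pos_INR N); lra).
  assert (HM0 : 0 <= M) by (eapply Rle_trans; [apply Rabs_pos | apply (HM O)]).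
  assert (HK : 0 <= K).
  { apply Rmult_le_pos; [apply Rmult_le_pos; [lra | apply Rlt_le, exp_pos] | apply pow_le; lra]. }
  assert (Hq : 0 <= q < 1).
  { unfold q. split; [apply Rdiv_le_0_compat; lra|].
    apply Rmult_lt_reg_r with (A + 1); [lra|].
    unfold Rdiv. rewrite Rmult_assoc, Rinv_l by lra. lra. }
  apply Rabs_eq_0, Rle_antisym; [|apply Rabs_pos].
  apply (le_geom_le0 _ K q Hq). intros t.
  set (s := s1 + INR (t + 2)).
  assert (wN : e N * Rpower A (- s) * Rpower A s = e N).
  { rewrite Rmult_assoc, <- Rpower_plus, Rplus_opp_l, Rpower_O by lra. ring. }
  rewrite <- wN.
  apply (series_isolated_term_bound
           (fun k => e k * Rpower (INR (S k)) (- s) * Rpower A s)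
           (fun k => K * q ^ t * / ((INR k + 1) * (INR k + 2)))).
  - rewrite <- (Rmult_0_l (Rpower A s)). apply is_series_scal_r, H.
    unfold s, s1. pose proof (pos_INR (t + 2)). lra.
  - pose proof (is_series_scal_r (K * q ^ t) _ _ is_series_inv_consecutive) as Hg.
    rewrite Rmult_1_l in Hg. eapply is_series_ext; [|exact Hg]. intros k. simpl. ring.
  - intros k. pose proof (pos_INR k).
    apply Rmult_le_pos; [apply Rmult_le_pos; [lra | apply pow_le; lra]|].
    apply Rlt_le, Rinv_0_lt_compat. nra.
  - intros k Hk. rewrite (IH k Hk). ring.
  - intros k Hk.
    assert (HX : A + 1 <= INR (S k)) by (unfold A; rewrite <- S_INR; apply le_INR; lia).
    eapply Rle_trans; [exact (dirichlet_term_ratio_bound _ M A _ s1 t HA HX (HM k))|].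
    right. unfold K, q. rewrite S_INR. field. pose proof (pos_INR k). nra.
Qed.

Lemma csum_ext k (f g : nat -> C) :
  (forall j, (j < k)%nat -> f j = g j) -> csum k f = csum k g.
Proof.
  induction k as [|k IH]; intros H; simpl; [reflexivity|].
  rewrite IH by (intros j Hj; apply H; lia). rewrite H by lia. reflexivity.
Qed.

Lemma csum_zero k (f : nat -> C) : (forall j, (j < k)%nat -> f j = 0%C) -> csum k f = 0%C.
Proof.
  induction k as [|k IH]; intros H; simpl; [reflexivity|].
  rewrite IH by (intros j Hj; apply H; lia). rewrite H by lia. ring.
Qed.

Lemma csum_mult_r k (f : nat -> C) (x : C) :
  csum k (fun j => f j * x)%C = (csum k f * x)%C.
Proof. induction k as [|k IH]; simpl; [ring|]. rewrite IH. ring. Qed.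

Lemma csum_minus k (f g : nat -> C) :
  csum k (fun j => f j - g j)%C = (csum k f - csum k g)%C.
Proof. induction k as [|k IH]; simpl; [ring|]. rewrite IH. ring. Qed.

Lemma is_series_csum k (c : nat -> C) (d : nat -> nat -> C) (l : nat -> C) :
  (forall j, (j < k)%nat -> is_series (d j) (l j)) ->
  is_series (fun m => csum k (fun j => c j * d j m))%C (csum k (fun j => c j * l j))%C.
Proof.
  induction k as [|k IH]; intros H; simpl.
  - apply (filterlim_ext (fun _ => zero)); [|apply filterlim_const].
    intros n. symmetry. apply (sum_n_m_const_zero (G := C_AbelianMonoid)).
  - apply (is_series_plus (V := C_NormedModule)).
    + apply IH. intros j Hj. apply H. lia.
    + apply (is_series_scal (V := C_NormedModule)), H. lia.
Qed.

Lemma Re_series (a : nat -> C) (l : C) :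
  is_series a l -> is_series (fun k => Re (a k)) (Re l).
Proof.
  intros H P [eps HP].
  assert (H1 : eventually (fun n => P (Re (sum_n a n)))).
  { apply (H (fun z : C => P (Re z))). exists eps. intros y [Hy1 Hy2]. apply HP. exact Hy1. }
  destruct H1 as [N HN]. exists N. intros n Hn.
  assert (E : Re (sum_n a n) = sum_n (fun k => Re (a k)) n).
  { clear. induction n as [|n IH]; [now rewrite !sum_O|]. now rewrite !sum_Sn, <- IH. }
  specialize (HN n Hn). rewrite E in HN. exact HN.
Qed.

Lemma Im_series (a : nat -> C) (l : C) :
  is_series a l -> is_series (fun k => Im (a k)) (Im l).
Proof.
  intros H.
  apply (is_series_scal (V := C_NormedModule) (0, -1)%R), Re_series in H.
  replace (Im l) with (Re ((0, -1) * l)%C) by (unfold Re, Im; simpl; ring).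
  eapply is_series_ext; [|exact H]. intros k.
  change (Re ((0, -1) * a k)%C = Im (a k)). unfold Re, Im; simpl; ring.
Qed.

Lemma Cmult_eq_0_reg_r (x z : C) : z <> 0%C -> (x * z)%C = 0%C -> x = 0%C.
Proof.
  intros Hz H. rewrite <- (Cmult_1_r x), <- (Cinv_r z Hz), Cmult_assoc, H. ring.
Qed.

Lemma dterm_eq b beta s k :
  dterm b beta s k = (npow (S k) (0, beta) * RtoC (b (S k)) * npow (S k) (- s))%C.
Proof.
  unfold dterm. destruct Req_EM_T as [E|E]; [|reflexivity].
  rewrite E. ring.
Qed.

Lemma npow_real n sigma : npow n (- (sigma, 0))%C = RtoC (Rpower (INR n) (- sigma)).
Proof.
  unfold npow, Rpower. simpl. rewrite Ropp_0, Rmult_0_l, cos_0, sin_0.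
  apply injective_projections; simpl; ring.
Qed.

Lemma is_series_fbeta b beta s : dconv b beta s -> is_series (dterm b beta s) (fbeta b beta s).
Proof.
  intros [l Hl]. replace (fbeta b beta s) with l; [exact Hl|].
  unfold fbeta. apply injective_projections; simpl; symmetry; apply is_series_unique.
  - now apply Re_series.
  - now apply Im_series.
Qed.

Lemma dirichlet_series_coeff_eq0_C (e : nat -> C) (s0 : R) :
  (forall s, s0 < s ->
     is_series (fun k => e k * RtoC (Rpower (INR (S k)) (- s)))%C (RtoC 0)) ->
  forall n, e n = 0%C.
Proof.
  intros H n. apply injective_projections; simpl;
    [apply (dirichlet_series_coeff_eq0 (fun k => Re (e k)) s0)
    |apply (dirichlet_series_coeff_eq0 (fun k => Im (e k)) s0)];
    intros s Hs; eapply is_series_ext;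
    [| apply (Re_series _ _ (H s Hs)) | | apply (Im_series _ _ (H s Hs))];
    intros k; unfold Re, Im; simpl; ring.
Qed.

Lemma dirichlet_combination_eq0_on_supp (rho : R) (b : nat -> R) (k : nat)
    (beta : nat -> R) (c : nat -> C) :
  (forall beta s, rho < Re s -> dconv b beta s) ->
  (forall s, rho < Re s -> csum k (fun j => c j * fbeta b (beta j) s)%C = 0%C) ->
  forall n, in_supp b n -> csum k (fun j => c j * npow n (0, beta j))%C = 0%C.
Proof.
  intros Hconv Hsum n [Hn Hbn].
  set (P := fun n => csum k (fun j => c j * npow n (0, beta j))%C).
  assert (HE : forall m, (P (S m) * RtoC (b (S m)))%C = 0%C).
  { apply (dirichlet_series_coeff_eq0_C _ rho). intros s Hs.
    rewrite <- (Hsum (s, 0) Hs).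
    eapply is_series_ext;
      [|apply is_series_csum; intros j _; apply is_series_fbeta, Hconv, Hs].
    intros m. unfold P. rewrite <- !csum_mult_r. apply csum_ext. intros j _.
    rewrite dterm_eq, npow_real. ring. }
  destruct n as [|m]; [lia|].
  apply (Cmult_eq_0_reg_r _ (RtoC (b (S m)))), HE.
  intros E. apply Hbn. now injection E.
Qed.

Lemma npow_mul m n w : (1 <= m)%nat -> (1 <= n)%nat ->
  npow (m * n) w = (npow m w * npow n w)%C.
Proof.
  intros Hm Hn. unfold npow.
  rewrite mult_INR, ln_mult by (apply lt_0_INR; lia).
  apply injective_projections; simpl;
    rewrite !Rmult_plus_distr_l, exp_plus; [rewrite cos_plus | rewrite sin_plus]; ring.
Qed.

Lemma npow_pow p a w : (1 <= p)%nat -> npow (p ^ a) w = Cpow (npow p w) a.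
Proof.
  intros Hp. induction a as [|a IH]; simpl.
  - unfold npow. simpl. rewrite ln_1, !Rmult_0_r, exp_0, cos_0, sin_0.
    apply injective_projections; simpl; ring.
  - rewrite npow_mul, IH; [reflexivity | lia |].
    pose proof (Nat.pow_nonzero p a). lia.
Qed.

Lemma npow_imag n beta :
  npow n (0, beta) = (cos (beta * ln (INR n)), sin (beta * ln (INR n))).
Proof.
  unfold npow. simpl. rewrite Rmult_0_l, exp_0.
  apply injective_projections; simpl; ring.
Qed.

Lemma npow_imag_neq0 n beta : npow n (0, beta) <> 0%C.
Proof.
  rewrite npow_imag. intros H. injection H as Hc Hs.
  pose proof (sin2_cos2 (beta * ln (INR n))). unfold Rsqr in *. rewrite Hc, Hs in *. lra.
Qed.

Lemma cos_sin_eq_2PI x y :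
  cos x = cos y -> sin x = sin y -> exists m : Z, x - y = 2 * IZR m * PI.
Proof.
  intros Hc Hs.
  assert (H1 : cos (2 * ((x - y) / 2)) = 1).
  { replace (2 * ((x - y) / 2)) with (x - y) by field.
    rewrite cos_minus, Hc, Hs. pose proof (sin2_cos2 y). unfold Rsqr in *. lra. }
  rewrite cos_2a_sin in H1.
  destruct (sin_eq_0_0 ((x - y) / 2)) as [m Hm]; [nra|].
  exists m. lra.
Qed.

Lemma npow_imag_eq_2PI n b1 b2 : npow n (0, b1) = npow n (0, b2) ->
  exists m : Z, (b1 - b2) * ln (INR n) = 2 * IZR m * PI.
Proof.
  rewrite !npow_imag. intros E. injection E as Hc Hs.
  destruct (cos_sin_eq_2PI _ _ Hc Hs) as [m Hm]. exists m. lra.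
Qed.

Lemma coprime_pow_eq p q m n : (2 <= p)%nat -> Nat.gcd p q = 1%nat ->
  (p ^ n = q ^ m)%nat -> n = 0%nat.
Proof.
  intros Hp Hpq E. destruct n as [|n]; [reflexivity|].
  assert (Hdiv : Nat.divide p (q ^ m)) by (exists (p ^ n)%nat; rewrite <- E; simpl; lia).
  clear E. exfalso. induction m as [|m IH]; simpl in Hdiv.
  - apply Nat.divide_1_r in Hdiv. lia.
  - apply IH, (Nat.gauss p q); assumption.
Qed.

Lemma ln_coprime_indep p q (m n : nat) : (2 <= p)%nat -> (2 <= q)%nat ->
  Nat.gcd p q = 1%nat -> INR m * ln (INR q) = INR n * ln (INR p) -> n = 0%nat.
Proof.
  intros Hp Hq Hpq E.
  apply (coprime_pow_eq p q m n Hp Hpq), INR_eq.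
  rewrite !pow_INR. apply ln_inv; try (apply pow_lt, lt_0_INR; lia).
  rewrite !ln_pow by (apply lt_0_INR; lia). lra.
Qed.

Lemma ln_nat_pos n : (2 <= n)%nat -> 0 < ln (INR n).
Proof.
  intros Hn. rewrite <- ln_1. apply ln_increasing; [lra|].
  apply (lt_INR 1). lia.
Qed.

Lemma npow_imag_pair_inj p q b1 b2 : (2 <= p)%nat -> (2 <= q)%nat -> Nat.gcd p q = 1%nat ->
  npow p (0, b1) = npow p (0, b2) -> npow q (0, b1) = npow q (0, b2) -> b1 = b2.
Proof.
  intros Hp Hq Hpq Ep Eq.
  destruct (npow_imag_eq_2PI _ _ _ Ep) as [m Hm].
  destruct (npow_imag_eq_2PI _ _ _ Eq) as [n Hn].
  pose proof (ln_nat_pos p Hp). pose proof (ln_nat_pos q Hq). pose proof PI_RGT_0.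
  assert (cross : IZR m * ln (INR q) = IZR n * ln (INR p)).
  { apply Rmult_eq_reg_l with (2 * PI); [|lra].
    transitivity ((b1 - b2) * ln (INR p) * ln (INR q)); [rewrite Hm; ring|].
    replace ((b1 - b2) * ln (INR p) * ln (INR q))
      with ((b1 - b2) * ln (INR q) * ln (INR p)) by ring.
    rewrite Hn. ring. }
  assert (cross_abs : INR (Z.abs_nat m) * ln (INR q) = INR (Z.abs_nat n) * ln (INR p)).
  { rewrite (INR_IZR_INZ (Z.abs_nat m)), (INR_IZR_INZ (Z.abs_nat n)).
    rewrite !Zabs2Nat.id_abs, !abs_IZR.
    rewrite <- (Rabs_pos_eq (ln (INR q))), <- (Rabs_pos_eq (ln (INR p))) by lra.
    rewrite <- !Rabs_mult.
    now rewrite cross. }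
  apply ln_coprime_indep in cross_abs; [|assumption..].
  assert (n = 0%Z) as -> by lia.
  apply Rminus_diag_uniq, (Rmult_eq_reg_r (ln (INR q))); lra.
Qed.

Definition moments_vanish (k : nat) (c z w : nat -> C) : Prop :=
  forall a a', csum k (fun j => c j * Cpow (z j) a * Cpow (w j) a')%C = 0%C.

Lemma moments_vanish_swap k c z w : moments_vanish k c z w -> moments_vanish k c w z.
Proof.
  intros H a a'. rewrite <- (H a' a). apply csum_ext. intros j _. ring.
Qed.

Lemma moments_vanish_reduce k c z w : moments_vanish (S k) c z w ->
  moments_vanish k (fun j => c j * (z j - z k))%C z w.
Proof.
  intros H a a'.
  transitivity (csum (S k) (fun j => c j * (z j - z k) * Cpow (z j) a * Cpow (w j) a')%C);
    [simpl; ring|].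
  rewrite (csum_ext _ _ (fun j => c j * Cpow (z j) (S a) * Cpow (w j) a'
                                 - c j * Cpow (z j) a * Cpow (w j) a' * z k)%C)
    by (intros j _; simpl; ring).
  rewrite csum_minus, csum_mult_r, (H (S a) a'), (H a a'). ring.
Qed.

Lemma moments_vanish_eq0 k c z w : moments_vanish k c z w ->
  (forall i j, (i < k)%nat -> (j < k)%nat -> z i = z j -> w i = w j -> i = j) ->
  forall j, (j < k)%nat -> c j = 0%C.
Proof.
  revert c. induction k as [|k IH]; intros c H Hinj; [lia|].
  assert (Hinj' : forall i j, (i < k)%nat -> (j < k)%nat -> z i = z j -> w i = w j -> i = j)
    by (intros i j Hi Hj; apply Hinj; lia).
  assert (Hlt : forall i, (i < k)%nat -> c i = 0%C).
  { intros i Hi. destruct (classic (z i = z k)) as [Ez|Ez].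
    - assert (Ew : w i <> w k).
      { intros Ew. specialize (Hinj i k ltac:(lia) ltac:(lia) Ez Ew). lia. }
      apply (Cmult_eq_0_reg_r _ (w i - w k)); [now apply Cminus_eq_contra|].
      apply (IH _ (moments_vanish_swap _ _ _ _ (moments_vanish_reduce _ _ _ _
                     (moments_vanish_swap _ _ _ _ H))) Hinj' i Hi).
    - apply (Cmult_eq_0_reg_r _ (z i - z k)); [now apply Cminus_eq_contra|].
      apply (IH _ (moments_vanish_reduce _ _ _ _ H) Hinj' i Hi). }
  intros j Hj. destruct (Nat.eq_dec j k) as [->|Hne]; [|apply Hlt; lia].
  specialize (H O O). simpl in H.
  rewrite csum_zero in H by (intros i Hi; rewrite Hlt by exact Hi; ring).
  rewrite <- H. ring.
Qed.

Lemma in_supp_pow b r a : (forall m n, in_supp b m -> in_supp b n -> in_supp b (m * n)) ->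
  in_supp b r -> in_supp b (r ^ S a).
Proof.
  intros Hmul Hr. induction a as [|a IH].
  - simpl. now rewrite Nat.mul_1_r.
  - change (r ^ S (S a))%nat with (r * r ^ S a)%nat. now apply Hmul.
Qed.

Theorem proposition5p5 (rho : R) (b : nat -> R) :
  admissible b ->
  (forall (beta : R) (s : C), rho < Re s -> dconv b beta s) ->
  forall (k : nat) (beta : nat -> R) (c : nat -> C),
    (forall i j, (i < k)%nat -> (j < k)%nat -> beta i = beta j -> i = j) ->
    (forall s : C, rho < Re s -> csum k (fun j => (c j * fbeta b (beta j) s)%C) = 0%C) ->
    forall j, (j < k)%nat -> c j = 0%C.
Proof.
  intros [_ [Hmul [p [q [Hp [Hq [Hp1 [Hq1 Hpq]]]]]]]] Hconv k beta c Hinj Hsum.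
  pose proof (dirichlet_combination_eq0_on_supp rho b k beta c Hconv Hsum) as HP.
  set (z := fun j => npow p (0, beta j)). set (w := fun j => npow q (0, beta j)).
  assert (Hmom : moments_vanish k (fun j => c j * z j * w j)%C z w).
  { intros a a'.
    pose proof (in_supp_pow b p a Hmul Hp) as Hpa.
    pose proof (in_supp_pow b q a' Hmul Hq) as Hqa.
    rewrite <- (HP _ (Hmul _ _ Hpa Hqa)). apply csum_ext. intros j _.
    rewrite npow_mul, !npow_pow
      by first [exact (proj1 Hpa) | exact (proj1 Hqa) | exact (proj1 Hp) | exact (proj1 Hq)].
    unfold z, w. simpl. ring. }
  assert (Hp2 : (2 <= p)%nat) by (destruct Hp; lia).
  assert (Hq2 : (2 <= q)%nat) by (destruct Hq; lia).
  intros j Hj.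
  apply (Cmult_eq_0_reg_r _ (z j)); [apply npow_imag_neq0|].
  apply (Cmult_eq_0_reg_r _ (w j)); [apply npow_imag_neq0|].
  apply (moments_vanish_eq0 k _ z w Hmom); [|exact Hj].
  intros i i' Hi Hi' Ez Ew.
  exact (Hinj i i' Hi Hi' (npow_imag_pair_inj p q _ _ Hp2 Hq2 Hpq Ez Ew)).
Qed.
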